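(* Fix a positive integer $N$ and a real $c>0$. For each integer $K\ge2$ let $M_K$ be a positive integer, with $M_K/(KN)\to c$ as $K\to\infty$, and let $$d^*_\mathrm{sum}(K)=\min\left\{\frac{3M_K}{2},\ \max\left\{M_K+\frac{5M_KN}{9M_K+N},\ \frac{\sqrt{3K}N}{2}\right\},\ M_K+\frac{KN^2}{3M_K},\ KN\right\}$$ be the achievable total DoF of the symmetric multi-relay MIMO Y channel with three $M_K$-antenna users and $K$ relays with $N$ antennas each. Then, with $N_\mathrm{total}=KN$, $\lim_{K\to\infty}\frac{d^*_\mathrm{sum}(K)}{N_\mathrm{total}}=\min\{c,1\}$, i.e. asymptotically $\frac{d^*_\mathrm{sum}}{N_\mathrm{total}}=\min\left\{\frac{M}{N_\mathrm{total}},1\right\}$.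
   Context: In the symmetric multi-relay MIMO Y channel (three users with $M$ antennas each exchanging messages pairwise via $K$ half-duplex relays with $N$ antennas each), $d^*_\mathrm{sum}$ denotes the total DoF shown achievable in the paper: $d^*_\mathrm{sum}=\min\{\frac{3M}{2},\max\{M+\frac{5MN}{9M+N},\frac{\sqrt{3K}N}{2}\},M+\frac{KN^2}{3M},KN\}$. $N_\mathrm{total}=KN$ is the total number of relay antennas. *)

From Stdlib Require Import Reals.
From Coquelicot Require Import Coquelicot.
Open Scope R_scope.

Definition dsum (M K N : R) : R :=
  Rmin (Rmin (Rmin (3 * M / 2)
                   (Rmax (M + 5 * M * N / (9 * M + N)) (sqrt (3 * K) * N / 2)))
             (M + K * N ^ 2 / (3 * M)))
       (K * N).

(** Divided by [K N], each term of [d*_sum] is a function of [x_K = M_K/(K N)]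
    and of [K]: the terms [3x/2] and [x] plus quantities that vanish as
    [K -> oo], while the last term is [1].  Since [Rmin] and [Rmax] are
    continuous, the limit is [min{3c/2, max{c, 0}, c, 1} = min{c, 1}]. *)
From Stdlib Require Import Reals Lra Lia.
From Coquelicot Require Import Coquelicot.
Open Scope R_scope.

Lemma Rmin_abs_form a b : Rmin a b = (a + b - Rabs (a - b)) / 2.
Proof. unfold Rmin, Rabs; destruct (Rle_dec a b), (Rcase_abs (a - b)); lra. Qed.

Lemma Rmax_abs_form a b : Rmax a b = (a + b + Rabs (a - b)) / 2.
Proof. unfold Rmax, Rabs; destruct (Rle_dec a b), (Rcase_abs (a - b)); lra. Qed.

Lemma is_lim_seq_Rmin (u v : nat -> R) (a b : R) :
  is_lim_seq u a -> is_lim_seq v b ->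
  is_lim_seq (fun n => Rmin (u n) (v n)) (Rmin a b).
Proof.
  intros Hu Hv.
  pose proof (is_lim_seq_abs _ _ (is_lim_seq_minus' _ _ _ _ Hu Hv)) as Habs.
  pose proof (is_lim_seq_minus' _ _ _ _ (is_lim_seq_plus' _ _ _ _ Hu Hv) Habs) as Hsum.
  rewrite Rmin_abs_form.
  apply (is_lim_seq_ext (fun n => (u n + v n - Rabs (u n - v n)) * / 2)).
  - intros n; rewrite Rmin_abs_form; reflexivity.
  - exact (is_lim_seq_scal_r _ _ _ Hsum).
Qed.

Lemma is_lim_seq_Rmax (u v : nat -> R) (a b : R) :
  is_lim_seq u a -> is_lim_seq v b ->
  is_lim_seq (fun n => Rmax (u n) (v n)) (Rmax a b).
Proof.
  intros Hu Hv.
  pose proof (is_lim_seq_abs _ _ (is_lim_seq_minus' _ _ _ _ Hu Hv)) as Habs.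
  pose proof (is_lim_seq_plus' _ _ _ _ (is_lim_seq_plus' _ _ _ _ Hu Hv) Habs) as Hsum.
  rewrite Rmax_abs_form.
  apply (is_lim_seq_ext (fun n => (u n + v n + Rabs (u n - v n)) * / 2)).
  - intros n; rewrite Rmax_abs_form; reflexivity.
  - exact (is_lim_seq_scal_r _ _ _ Hsum).
Qed.

Lemma is_lim_seq_inv_INR : is_lim_seq (fun n => / INR n) 0.
Proof. exact (is_lim_seq_inv _ _ is_lim_seq_INR ltac:(discriminate)). Qed.

Lemma is_lim_seq_le_inv_INR (u : nat -> R) (C : R) :
  eventually (fun n => 0 <= u n <= C * / INR n) -> is_lim_seq u 0.
Proof.
  intros Hb.
  apply (is_lim_seq_le_le_loc (fun _ => 0) u (fun n => C * / INR n) 0 Hb).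
  - apply is_lim_seq_const.
  - rewrite <- (Rmult_0_r C). exact (is_lim_seq_scal_l _ C _ is_lim_seq_inv_INR).
Qed.

Lemma is_lim_seq_sqrt_div_INR (a : R) : is_lim_seq (fun n => sqrt (a / INR n)) 0.
Proof.
  rewrite <- sqrt_0.
  apply (is_lim_seq_continuous sqrt); [exact (continuity_pt_sqrt 0 (Rle_refl 0))|].
  rewrite <- (Rmult_0_r a). exact (is_lim_seq_scal_l _ a _ is_lim_seq_inv_INR).
Qed.

Lemma sqrt_mul_div_self (a k : R) : 0 < k -> sqrt (a * k) / k = sqrt (a / k).
Proof.
  intros Hk.
  replace (a / k) with (a * k / (k * k)) by (field; lra).
  rewrite sqrt_div_alt, sqrt_square by nra. reflexivity.
Qed.

Lemma dsum_div_total (m k n : R) : 0 < m -> 0 < k -> 0 < n ->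
  let x := m / (k * n) in
  dsum m k n / (k * n) =
  Rmin (Rmin (Rmin (3 / 2 * x)
                   (Rmax (x + 5 * m / ((9 * m + n) * k)) (sqrt (3 / k) / 2)))
             (x + / (3 * x * k)))
       1.
Proof.
  intros Hm Hk Hn x.
  assert (Hkn : 0 <= / (k * n)) by (apply Rlt_le, Rinv_0_lt_compat, Rmult_lt_0_compat; assumption).
  unfold dsum, Rdiv at 1.
  rewrite !Rmult_min_distr_r, Rmult_max_distr_r by exact Hkn.
  assert (Hsqrt : sqrt (3 * k) * n / 2 * / (k * n) = sqrt (3 / k) / 2).
  { rewrite <- sqrt_mul_div_self by exact Hk. field; lra. }
  rewrite Hsqrt.
  replace (3 * m / 2 * / (k * n)) with (3 / 2 * x) by (unfold x; field; lra).
  replace ((m + 5 * m * n / (9 * m + n)) * / (k * n))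
    with (x + 5 * m / ((9 * m + n) * k)) by (unfold x; field; lra).
  replace ((m + k * n ^ 2 / (3 * m)) * / (k * n))
    with (x + / (3 * x * k)) by (unfold x; field; lra).
  replace (k * n * / (k * n)) with 1 by (field; lra).
  reflexivity.
Qed.

Lemma is_lim_seq_dsum_shape (x e s t : nat -> R) (c : R) : 0 < c ->
  is_lim_seq x c -> is_lim_seq e 0 -> is_lim_seq s 0 -> is_lim_seq t 0 ->
  is_lim_seq
    (fun K => Rmin (Rmin (Rmin (3 / 2 * x K) (Rmax (x K + e K) (s K))) (x K + t K)) 1)
    (Rmin c 1).
Proof.
  intros Hc Hx He Hs Ht.
  replace (Rmin c 1)
    with (Rmin (Rmin (Rmin (3 / 2 * c) (Rmax (c + 0) 0)) (c + 0)) 1).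
  2:{ rewrite Rplus_0_r, Rmax_left, (Rmin_right (3 / 2 * c)), (Rmin_left c c) by lra.
      reflexivity. }
  apply is_lim_seq_Rmin; [|apply is_lim_seq_const].
  apply is_lim_seq_Rmin; [apply is_lim_seq_Rmin; [|apply is_lim_seq_Rmax]|].
  - exact (is_lim_seq_scal_l _ _ _ Hx).
  - exact (is_lim_seq_plus' _ _ _ _ Hx He).
  - exact Hs.
  - exact (is_lim_seq_plus' _ _ _ _ Hx Ht).
Qed.

Theorem corollary4 (N : nat) (c : R) (M : nat -> nat) :
  (0 < N)%nat ->
  0 < c ->
  (forall K : nat, (2 <= K)%nat -> (0 < M K)%nat) ->
  is_lim_seq (fun K : nat => INR (M K) / (INR K * INR N)) c ->
  is_lim_seq (fun K : nat => dsum (INR (M K)) (INR K) (INR N) / (INR K * INR N))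
             (Rmin c 1).
Proof.
  intros HN Hc HM Hx.
  set (x := fun K => INR (M K) / (INR K * INR N)) in Hx.
  assert (Hn : 0 < INR N) by (apply lt_0_INR; exact HN).
  assert (Hpos : eventually (fun K => 0 < INR (M K) /\ 0 < INR K)).
  { exists 2%nat; intros K HK; split; apply lt_0_INR; [apply HM|]; lia. }
  eapply is_lim_seq_ext_loc.
  { eapply filter_imp; [|exact Hpos]; intros K [Hm Hk].
    symmetry; exact (dsum_div_total _ _ _ Hm Hk Hn). }
  apply (is_lim_seq_dsum_shape x); [exact Hc | exact Hx | | |].
  - apply (is_lim_seq_le_inv_INR _ (5 / 9)).
    eapply filter_imp; [|exact Hpos]; intros K [Hm Hk].
    split; apply Rmult_le_reg_r with ((9 * INR (M K) + INR N) * INR K);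
      try field_simplify; nra.
  - apply (is_lim_seq_ext (fun K => sqrt (3 / INR K) * / 2)); [reflexivity|].
    rewrite <- (Rmult_0_l (/ 2)).
    exact (is_lim_seq_scal_r _ _ _ (is_lim_seq_sqrt_div_INR 3)).
  - apply (is_lim_seq_ext (fun K => / (3 * x K) * / INR K)).
    { intros K; rewrite (Rinv_mult (3 * x K)); reflexivity. }
    rewrite <- (Rmult_0_r (/ (3 * c))).
    apply is_lim_seq_mult'; [|exact is_lim_seq_inv_INR].
    apply (is_lim_seq_inv _ (3 * c)); [exact (is_lim_seq_scal_l _ 3 _ Hx)|].
    intros H; injection H; lra.
Qed.
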